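(* Let $D$ be a finite directed graph with $n$ vertices having two distinct complete sources $c$ and $c'$. Let $\mathcal{T}_c$ be the set of spanning rooted directed trees $T$ of $D$ (subgraphs of $D$ containing all vertices) in which $c$ is a leaf. For $T\in\mathcal{T}_c$ let $S_T$ be the subcomplex defined below. Then $S_T\subseteq\Delta(D)$ for each $T\in\mathcal{T}_c$ and $$\Delta(D)=\bigcup_{T\in\mathcal{T}_c}S_T .$$ Definition of $S_T$: let $x_1$ be the root of $T$ and $x_1\to x_2\to\cdots\to x_k\to c$ the unique directed path in $T$ from $x_1$ to $c$; let $\sigma_T=\{\overrightarrow{x_1x_2},\ldots,\overrightarrow{x_{k-1}x_k},\overrightarrow{x_kc},\overrightarrow{cx_1}\}$ and let $\partial\sigma_T$ be the complex of all proper subsets of $\sigma_T$. Let $y_1,\ldots,y_r$ ($r=n-k-1$) be the remaining vertices of $D$, and for each $j$ let $z_j$ be the unique vertex with $\overrightarrow{z_jy_j}\in E(T)$. Then $$S_T=\partial\sigma_T*\{\overrightarrow{z_1y_1},\overrightarrow{cy_1}\}*\cdots*\{\overrightarrow{z_ry_r},\overrightarrow{cy_r}\},$$ where $*$ is the join of simplicial complexes and $\{a,b\}$ denotes the $0$-dimensional complex with the two vertices $a,b$ and no edge.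
   Context: For a finite directed graph $D$ (no loops, no multiple edges), the complex of directed trees $\Delta(D)$ has the directed edges of $D$ as vertices, and its faces are the edge sets of directed forests in $D$ (vertex-disjoint unions of rooted directed trees; equivalently, edge sets in which every vertex has in-degree at most $1$ and there is no directed cycle). A rooted directed tree with root $r$ is an acyclic digraph in which each vertex is reached from $r$ by a unique directed path; a leaf is a vertex of out-degree $0$ in the tree. A vertex $c$ of $D$ is a complete source if $\overrightarrow{cy}\in E(D)$ for every vertex $y\neq c$. We write $\overrightarrow{xy}$ for the directed edge from $x$ to $y$. *)

From mathcomp Require Import all_boot.
Set Implicit Arguments. Unset Strict Implicit. Unset Printing Implicit Defensive.

Section Digraph.
Variable V : finType.

(* A directed graph on V is D : rel V (edge x -> y iff D x y);
   edge sets are finite sets of ordered pairs (x, y) meaning x -> y. *)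
Definition edges (D : rel V) : {set V * V} := [set e | D e.1 e.2].

Definition erel (F : {set V * V}) : rel V := fun a b => (a, b) \in F.

Definition has_dcycle (F : {set V * V}) : Prop :=
  exists (x : V) (p : seq V), p != [::] /\ path (erel F) x p /\ last x p = x.

(* Faces of the complex of directed trees Delta(D): directed forests. *)
Definition directed_forest (D : rel V) (F : {set V * V}) : Prop :=
  F \subset edges D /\
  (forall y : V, #|[set e in F | e.2 == y]| <= 1) /\
  ~ has_dcycle F.

Definition dpath (F : {set V * V}) (r : V) (p : seq V) (v : V) : Prop :=
  path (erel F) r p /\ uniq (r :: p) /\ last r p = v.

Definition spanning_rooted_tree (D : rel V) (T : {set V * V}) (r : V) : Prop :=
  T \subset edges D /\ ~ has_dcycle T /\
  forall v : V, exists p, dpath T r p v /\ forall q, dpath T r q v -> q = p.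

Definition is_leaf (T : {set V * V}) (c : V) : Prop :=
  forall y : V, (c, y) \notin T.

Definition complete_source (D : rel V) (c : V) : Prop :=
  forall y : V, y != c -> D c y.

(* sigma_T for the path r = x_1 -> x_2 -> ... -> x_k -> c (given by r :: p,
   whose last vertex is c): the path edges together with the edge c -> x_1. *)
Definition sigmaT (r : V) (p : seq V) (c : V) : {set V * V} :=
  [set e | e \in zip (r :: p) p] :|: [set (c, r)].

(* Faces of S_T = (boundary of sigma_T) * {z_1y_1, cy_1} * ... * {z_ry_r, cy_r}:
   a proper subset of sigma_T, together with, for each vertex y off the path,
   either nothing, or the tree edge z_y -> y, or the edge c -> y. *)
Definition S_face (T : {set V * V}) (r : V) (p : seq V) (c : V)
    (F : {set V * V}) : Prop :=
  exists A : {set V * V}, A \proper sigmaT r p c /\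
  exists b : V -> option bool,
    F = A :|: [set e : V * V | (e.2 \notin r :: p) &&
                 match b e.2 with
                 | Some true => e \in T
                 | Some false => e.1 == c
                 | None => false
                 end].

End Digraph.

From mathcomp Require Import all_boot zify.
Set Implicit Arguments. Unset Strict Implicit. Unset Printing Implicit Defensive.

(* A face of S_T is a directed forest: every edge entering a vertex
   off the path x_1 -> ... -> x_k -> c comes from T or from c, and the edges of
   the proper subset of the cycle sigma_T, read from the head of its missing edge,
   are ranked by their position along the cycle.  Conversely, given a directed
   forest F, delete the edges leaving c and hang the root of every resulting
   component, except the one containing c', below the complete source c'; this
   yields a spanning tree T in which c is a leaf, and F is a face of S_T: on the
   path from the root of T to c, F can only use edges of sigma_T and misses one of
   them, and every other vertex receives from F either its T-edge, or the edge
   from c, or nothing. *)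

Section Digraph.
Variable V : finType.
Implicit Types (E : {set V * V}) (u v x y : V).

Lemma has_dcycleS E1 E2 : E1 \subset E2 -> has_dcycle E1 -> has_dcycle E2.
Proof.
move=> /subsetP sE [x [p [p_ne [p_path p_last]]]]; exists x, p; split=> //.
by split=> //; apply: sub_path p_path => a b /sE.
Qed.

Lemma edge_connect_dcycle E u v : (u, v) \in E -> connect (erel E) v u -> has_dcycle E.
Proof.
move=> uv /connectP [p p_path u_last]; exists v, (rcons p v).
by split; [case: p {p_path u_last} | rewrite rcons_path p_path -u_last last_rcons].
Qed.

Section Rank.
Variables (E : {set V * V}) (f : V -> nat).
Hypothesis f_incr : forall u v, (u, v) \in E -> f u < f v.

Lemma rank_path_le_last x p :
  path (erel E) x p -> {in x :: p, forall w, f w <= f (last x p)}.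
Proof.
elim: p x => [|y p IHp] x /=; first by move=> _ w; rewrite inE => /eqP ->.
move=> /andP [xy y_p] w; rewrite inE => /orP [/eqP ->|w_p]; last exact: IHp.
exact: ltnW (leq_trans (f_incr xy) (IHp _ y_p _ (mem_head _ _))).
Qed.

Lemma rank_no_dcycle : ~ has_dcycle E.
Proof.
move=> [x [[|y p] [// _ [/= /andP [xy y_p] p_last]]]].
by have := rank_path_le_last y_p (mem_head y p); rewrite p_last leqNgt f_incr.
Qed.

End Rank.

Definition depth E v := #|[set u | connect (erel E) u v]|.

Lemma depth_gt0 E v : 0 < depth E v.
Proof. by apply/card_gt0P; exists v; rewrite inE connect0. Qed.

Lemma depth_edge E u v : ~ has_dcycle E -> (u, v) \in E -> depth E u < depth E v.
Proof.
move=> E_acyc uv; apply/proper_card/properP; split.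
  by apply/subsetP=> w; rewrite !inE => /connect_trans; apply; apply: connect1.
exists v; first by rewrite inE connect0.
by rewrite inE; apply/negP => /(edge_connect_dcycle uv).
Qed.

Definition in_unique E := forall a a' y, (a, y) \in E -> (a', y) \in E -> a = a'.

Lemma in_uniqueP E : (forall y, #|[set e in E | e.2 == y]| <= 1) <-> in_unique E.
Proof.
split=> [E_deg a a' y ay a'y | E_uniq y].
  have /card_le1_eqP/(_ (a, y) (a', y)) := E_deg y.
  by rewrite !inE ay a'y eqxx => /(_ isT isT) [].
apply/card_le1_eqP => [[a b] [a' b']]; rewrite !inE /=.
by move=> /andP [ab /eqP eb] /andP [a'b' /eqP eb']; subst; rewrite (E_uniq _ _ _ ab a'b').
Qed.

Lemma in_uniqueS E1 E2 : E1 \subset E2 -> in_unique E2 -> in_unique E1.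
Proof. by move=> /subsetP sE E_uniq a a' y /sE ay /sE; apply: E_uniq. Qed.

End Digraph.

Section ForestRoot.
Variables (V : finType) (E : {set V * V}).
Hypotheses (E_uniq : in_unique E) (E_acyc : ~ has_dcycle E).
Implicit Types (u v : V).

Definition parent v := if [pick u | (u, v) \in E] is Some u then u else v.
Definition forest_root v := iter #|V| parent v.

Lemma parent_edge u v : (u, v) \in E -> parent v = u.
Proof.
by rewrite /parent; case: pickP => [u' /= u'v uv|/(_ u) /= ->] //; apply: E_uniq u'v uv.
Qed.

Lemma parentP v :
  (parent v, v) \in E \/ (forall u, (u, v) \notin E) /\ parent v = v.
Proof.
rewrite /parent; case: pickP => [u /= uv|no_par]; first by left.
by right; split=> // u; rewrite no_par.
Qed.

Lemma parent_id v : (forall u, (u, v) \notin E) -> parent v = v.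
Proof.
move=> no_par; case: (parentP v) => [pv|[_ //]].
by move: (no_par (parent v)); rewrite pv.
Qed.

Lemma iter_parent_id k v : (forall u, (u, v) \notin E) -> iter k parent v = v.
Proof. by move=> no_par; elim: k => //= k ->; apply: parent_id. Qed.

Lemma iter_parent_noin k v : depth E v <= k.+1 -> forall u, (u, iter k parent v) \notin E.
Proof.
elim: k v => [|k IHk] v dv u.
  by apply/negP => /(depth_edge E_acyc); rewrite ltnNge (leq_trans dv (depth_gt0 E u)).
rewrite iterSr; case: (parentP v) => [pv|[no_par ->]]; last by rewrite iter_parent_id.
by apply: IHk; have := depth_edge E_acyc pv; lia.
Qed.

Lemma forest_root_noin v u : (u, forest_root v) \notin E.
Proof. by apply: iter_parent_noin; apply: leqW; apply: max_card. Qed.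

Lemma forest_root_connect v : connect (erel E) (forest_root v) v.
Proof.
rewrite /forest_root; elim: #|V| v => [|k IHk] v; first exact: connect0.
rewrite iterSr; apply: connect_trans (IHk _) _.
by case: (parentP v) => [pv|[_ ->]]; [apply: connect1|apply: connect0].
Qed.

Lemma forest_root_edge u v : (u, v) \in E -> forest_root u = forest_root v.
Proof.
move=> uv; rewrite /forest_root -(parent_edge uv) -iterSr iterS.
by rewrite parent_id // => w; apply: forest_root_noin.
Qed.

Lemma forest_root_id v : (forall u, (u, v) \notin E) -> forest_root v = v.
Proof. exact: iter_parent_id. Qed.

End ForestRoot.

Section ConsecutivePairs.
Variable V : eqType.
Implicit Types (s p : seq V) (a b r : V).

Lemma mem_zip_behead s a b : uniq s -> (a, b) \in zip s (behead s) ->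
  [/\ a \in s, b \in s & index b s = (index a s).+1].
Proof.
elim: s => [|x [|y s] IHs] //=; rewrite inE => /andP [x_notin s_uniq].
rewrite inE => /orP [/eqP [-> ->]|ab].
  rewrite !inE !eqxx orbT; split=> //=.
  by case: eqP x_notin => // ->; rewrite inE eqxx.
have [a_s b_s b_idx] := IHs s_uniq ab.
have [xa xb] : x != a /\ x != b by split; apply: contraNneq x_notin => ->.
split; [by rewrite a_s orbT | by rewrite in_cons b_s orbT |].
by move: b_idx => /=; rewrite (negbTE xa) (negbTE xb) => ->.
Qed.

Lemma zip_pred_exists r p b : b \in p -> exists a, (a, b) \in zip (r :: p) p.
Proof.
elim: p r => [|x p IHp] r //=; rewrite inE => /orP [/eqP ->|b_p].
  by exists r; rewrite inE eqxx.
by have [a ab] := IHp x b_p; exists a; rewrite inE ab orbT.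
Qed.

End ConsecutivePairs.

Section RootedTree.
Variables (V : finType) (T : {set V * V}) (r : V).
Implicit Types (u v : V) (p q : seq V).

Lemma path_zip_edge x p a b :
  path (erel T) x p -> (a, b) \in zip (x :: p) p -> (a, b) \in T.
Proof.
elim: p x => [|y p IHp] x //= /andP [xy y_p]; rewrite inE => /orP [/eqP [-> ->] //|].
exact: IHp.
Qed.

Lemma mem_path_connect x p v :
  path (erel T) x p -> v \in x :: p -> connect (erel T) v (last x p).
Proof.
elim: p x v => [|y p IHp] x v /=; first by move=> _; rewrite inE => /eqP ->.
move=> /andP [xy y_p]; rewrite inE => /orP [/eqP ->|v_p]; last exact: IHp.
exact: connect_trans (connect1 xy) (IHp _ _ y_p (mem_head _ _)).
Qed.

Lemma dpath_rcons q u v :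
  ~ has_dcycle T -> (u, v) \in T -> dpath T r q u -> dpath T r (rcons q v) v.
Proof.
move=> T_acyc uv [q_path [q_uniq q_last]].
split; first by rewrite rcons_path q_path q_last.
rewrite last_rcons -rcons_cons rcons_uniq q_uniq andbT; split=> //.
apply/negP => /(mem_path_connect q_path); rewrite q_last.
by move/(edge_connect_dcycle uv).
Qed.

Hypotheses (r_orphan : forall u, (u, r) \notin T) (T_uniq : in_unique T).

Lemma path_last_inj q q' :
  path (erel T) r q -> path (erel T) r q' -> last r q = last r q' -> q = q'.
Proof.
elim/last_ind: q q' => [|q x IHq] q'; case/lastP: q' => [|q' x'] //=;
  rewrite ?rcons_path ?last_rcons.
- by move=> _ /andP [_] + /esym x'r; rewrite x'r /erel (negbTE (r_orphan _)).
- by move=> /andP [_] + _ xr; rewrite xr /erel (negbTE (r_orphan _)).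
move=> /andP [q_path qx] /andP [q'_path q'x'] xx'; subst x'.
by rewrite (IHq q' q_path q'_path (T_uniq qx q'x')).
Qed.

Lemma dpath_connect_mem p c u :
  dpath T r p c -> connect (erel T) u c -> u \in r :: p.
Proof.
move=> [p_path [p_uniq p_last]] /connectP [q q_path c_last]; rewrite {c}c_last in p_last.
elim: q u q_path p_last => [|x q IHq] u /=; first by move=> _ <-; rewrite mem_last.
move=> /andP [ux x_q] p_last; have x_s := IHq x x_q p_last.
have x_p : x \in p.
  by move: x_s; rewrite in_cons; case: eqP ux => [->|//]; rewrite /erel (negbTE (r_orphan _)).
have [a ax] := zip_pred_exists r x_p.
rewrite -(T_uniq (path_zip_edge p_path ax) ux).
by case: (mem_zip_behead p_uniq ax).
Qed.

Lemma spanning_rooted_tree_of_rank D (f : V -> nat) :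
  T \subset edges D -> (forall v, v != r -> exists u, (u, v) \in T) ->
  (forall u v, (u, v) \in T -> f u < f v) -> spanning_rooted_tree D T r.
Proof.
move=> T_D has_parent f_incr; have T_acyc := rank_no_dcycle f_incr.
split=> //; split=> // v.
have [p p_dpath] : exists p, dpath T r p v.
  elim: (f v) {-2}v (leqnn (f v)) => [|n IHn] w; case: (eqVneq w r) => [->|wr];
    try by exists [::].
  - by have [u /f_incr] := has_parent w wr; case: (f w).
  have [u uw] := has_parent w wr; have := f_incr _ _ uw => fu fw.
  have [q q_dpath] := IHn u (leq_trans fu fw).
  by exists (rcons q w); apply: dpath_rcons q_dpath.
exists p; split=> // q [q_path [_ q_last]].
by case: p_dpath => [p_path [_ p_last]]; apply: path_last_inj; rewrite ?q_last.
Qed.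

End RootedTree.

Section SpanningTree.
Variables (V : finType) (D : rel V) (T : {set V * V}) (r : V).
Hypothesis T_tree : spanning_rooted_tree D T r.

Lemma tree_acyclic : ~ has_dcycle T.
Proof. by case: T_tree => _ []. Qed.

Lemma tree_root_orphan u : (u, r) \notin T.
Proof.
apply/negP => ur; case: T_tree => _ [_ /(_ u) [q [[q_path [_ q_last]] _]]].
apply: tree_acyclic (edge_connect_dcycle ur _).
by rewrite -q_last; apply: mem_path_connect q_path (mem_head _ _).
Qed.

Lemma tree_in_unique : in_unique T.
Proof.
move=> a a' y ay a'y; case: T_tree => _ [_ paths].
have [q [q_dpath _]] := paths a; have [q' [q'_dpath _]] := paths a'.
have [s [_ s_uniq]] := paths y.
have := s_uniq _ (dpath_rcons tree_acyclic ay q_dpath).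
rewrite -(s_uniq _ (dpath_rcons tree_acyclic a'y q'_dpath)) => /rcons_inj [q_eq].
by case: q_dpath q'_dpath => [_ [_ <-]] [_ [_ <-]]; rewrite q_eq.
Qed.
End SpanningTree.

(* [cyc_rank j m i] is [(i - j - 1) mod (m + 1)]: the position of vertex [i] of
   the cycle [0 -> 1 -> ... -> m -> 0] when it is read starting right after the
   edge [j -> j + 1]. *)
Definition cyc_rank j m i := if j < i then i - j - 1 else i + m - j.

Lemma cyc_rank_le j m i : i <= m -> j <= m -> cyc_rank j m i <= m.
Proof. by rewrite /cyc_rank; case: ltnP; lia. Qed.

Lemma cyc_rank_succ j m i : j <= m -> i < m -> i != j ->
  cyc_rank j m i < cyc_rank j m i.+1.
Proof.
by rewrite /cyc_rank => jm im /eqP ij; case: (ltnP j i); case: (ltnP j i.+1); lia.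
Qed.

Lemma cyc_rank_wrap j m : j < m -> cyc_rank j m m < cyc_rank j m 0.
Proof. by rewrite /cyc_rank ltn0 => jm; rewrite jm; lia. Qed.

Section SFaceForest.
Variables (V : finType) (D : rel V) (c c' r : V) (T : {set V * V}) (p : seq V).
Hypotheses (c_neq_c' : c != c') (c_src : complete_source D c).
Hypotheses (T_tree : spanning_rooted_tree D T r) (c_leaf : is_leaf T c).
Hypothesis p_dpath : dpath T r p c.
Local Notation s := (r :: p).

Lemma root_neq_leaf : r != c.
Proof.
apply/eqP => rc; case: T_tree => _ [_ /(_ c') [[|x q] [[/= q_path [_ q_last]] _]]].
  by move: c_neq_c'; rewrite -q_last rc eqxx.
by case/andP: q_path; rewrite /erel rc (negbTE (c_leaf x)).
Qed.

Lemma leaf_on_path : c \in s.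
Proof. by case: p_dpath => _ [_ <-]; apply: mem_last. Qed.

Lemma mem_sigmaT a b : (a, b) \in sigmaT r p c ->
  [/\ a \in s, b \in s & index b s = (index a s).+1 \/ (a, b) = (c, r)].
Proof.
case: p_dpath => _ [s_uniq _].
rewrite in_setU in_set1 inE => /orP [/(mem_zip_behead s_uniq) [] | /eqP [-> ->]].
  by split=> //; left.
by split; [apply: leaf_on_path | apply: mem_head | right].
Qed.

Lemma sigmaT_sub_edges : sigmaT r p c \subset edges D.
Proof.
apply/subsetP=> e; case: T_tree => /subsetP T_D _; case: p_dpath => p_path _.
rewrite !inE => /orP [|/eqP ->]; last by apply: c_src; apply: root_neq_leaf.
by case: e => a b /(path_zip_edge p_path) /T_D; rewrite inE.
Qed.

Lemma index_leaf : index c s = size p.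
Proof. by case: p_dpath => _ [s_uniq <-]; apply: index_last. Qed.

Lemma sigmaT_out_unique a v v' :
  (a, v) \in sigmaT r p c -> (a, v') \in sigmaT r p c -> v = v'.
Proof.
move=> /mem_sigmaT [a_s v_s [v_idx|[ac ->]]] /mem_sigmaT [_ v'_s [v'_idx|[ac' ->]]] //.
- by apply: (index_inj r v_s v'_s); rewrite v_idx v'_idx.
- by move: v_s; rewrite -index_mem v_idx ac' index_leaf [size _]/= ltnn.
- by move: v'_s; rewrite -index_mem v'_idx ac index_leaf [size _]/= ltnn.
Qed.

Lemma sigmaT_in_unique : in_unique (sigmaT r p c).
Proof.
move=> a a' y /mem_sigmaT [a_s _ [y_idx|[a_c y_r]]].
all: move=> /mem_sigmaT [a'_s _ [y'_idx|[a'_c y'_r]]].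
- by apply: (index_inj r a_s a'_s); apply: succn_inj; rewrite -y_idx -y'_idx.
- by move: y_idx; rewrite y'_r index_head.
- by move: y'_idx; rewrite y_r index_head.
- by rewrite a_c a'_c.
Qed.

Section Face.
Variables (A : {set V * V}) (b : V -> option bool).
Hypothesis A_proper : A \proper sigmaT r p c.

Definition chosen_edges : {set V * V} :=
  [set e : V * V | (e.2 \notin s) &&
     match b e.2 with
     | Some true => e \in T
     | Some false => e.1 == c
     | None => false
     end].

Local Notation F := (A :|: chosen_edges).

Lemma mem_chosen_edges u v : (u, v) \in chosen_edges ->
  v \notin s /\ (b v = Some true /\ (u, v) \in T \/ b v = Some false /\ u = c).
Proof.
rewrite inE /= => /andP [v_s chosen]; split=> //; move: chosen.
by case: (b v) => [[]|] // => [uv|/eqP uc]; [left|right].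
Qed.

Lemma S_face_sub_edges : F \subset edges D.
Proof.
have [/subsetP A_sigma _] := properP A_proper.
apply/subsetP => [[u v]]; rewrite inE => /orP [/A_sigma|/mem_chosen_edges].
  exact: (subsetP sigmaT_sub_edges).
case: T_tree => /subsetP T_D _ [v_s [[_ /T_D] //|[_ ->]]].
by rewrite inE /=; apply: c_src; apply: contraNneq v_s => ->; apply: leaf_on_path.
Qed.

Lemma S_face_in_unique : in_unique F.
Proof.
have [A_sigma _] := properP A_proper.
move=> a a' y; rewrite !in_setU; case: (boolP (y \in s)) => y_s.
  have not_chosen u : (u, y) \in chosen_edges = false.
    by apply/negP => /mem_chosen_edges []; rewrite y_s.
  by rewrite !not_chosen !orbF; apply: (in_uniqueS A_sigma sigmaT_in_unique).
have not_A u : (u, y) \in A = false.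
  by apply/negP => /(subsetP A_sigma) /mem_sigmaT []; rewrite (negbTE y_s).
rewrite !not_A /= => /mem_chosen_edges [_ [[bt ay]|[bf ->]]].
  case/mem_chosen_edges => _ [[_ a'y]|[bf _]]; last by rewrite bt in bf.
  exact: (tree_in_unique T_tree) ay a'y.
by case/mem_chosen_edges => _ [[bt _]|[_ ->]] //; rewrite bf in bt.
Qed.

Lemma S_face_acyclic : ~ has_dcycle F.
Proof.
have [A_sigma [[a0 b0] e0_sigma e0_A]] := properP A_proper.
have [a0_s _ _] := mem_sigmaT e0_sigma.
have index_le v : v \in s -> index v s <= size p by rewrite -index_mem.
pose j := index a0 s.
have j_le : j <= size p := index_le _ a0_s.
pose f v := if v \in s then cyc_rank j (size p) (index v s) else (size p).+1 + depth T v.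
have f_on_path v : v \in s -> f v <= size p.
  by move=> v_s; rewrite /f v_s cyc_rank_le ?index_le.
apply: (@rank_no_dcycle _ _ f) => u v; rewrite in_setU => /orP [uv_A|].
  have uv_sigma := subsetP A_sigma _ uv_A.
  have [u_s v_s v_next] := mem_sigmaT uv_sigma.
  have u_j : index u s != j.
    apply: contraNneq e0_A => /(index_inj r u_s a0_s) ua0; rewrite -ua0 in e0_sigma *.
    by rewrite -(sigmaT_out_unique uv_sigma e0_sigma).
  rewrite /f u_s v_s; case: v_next u_j => [v_idx|[-> ->]] u_j.
    by rewrite v_idx cyc_rank_succ // -v_idx index_le.
  rewrite index_leaf index_head cyc_rank_wrap // ltn_neqAle j_le andbT.
  by rewrite eq_sym -index_leaf.
case/mem_chosen_edges => v_s uv_chosen.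
have -> : f v = (size p).+1 + depth T v by rewrite /f (negbTE v_s).
case: (boolP (u \in s)) => u_s.
  by apply: leq_ltn_trans (f_on_path u u_s) _; rewrite addSn ltnS leq_addr.
case: uv_chosen => [[_ uv_T]|[_ uc]]; last by rewrite uc leaf_on_path in u_s.
by rewrite /f (negbTE u_s) ltn_add2l; apply: depth_edge (tree_acyclic T_tree) uv_T.
Qed.

End Face.

Lemma S_face_forest F : S_face T r p c F -> directed_forest D F.
Proof.
case=> A [A_proper [b ->]]; split; first exact: S_face_sub_edges.
by split; [apply/in_uniqueP/S_face_in_unique | apply: S_face_acyclic].
Qed.

End SFaceForest.

Section ForestToTree.
Variables (V : finType) (D : rel V) (c c' : V) (F : {set V * V}).
Hypotheses (c_neq_c' : c != c') (c'_src : complete_source D c').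
Hypothesis F_forest : directed_forest D F.

Lemma forest_in_unique : in_unique F.
Proof. by case: F_forest => _ [/in_uniqueP]. Qed.

Lemma forest_acyclic : ~ has_dcycle F.
Proof. by case: F_forest => _ []. Qed.

(* [TF] keeps the forest [Fc] obtained by cutting the edges leaving [c], and
   hangs the root of every component of [Fc] other than that of [c'] below [c']. *)
Definition Fc := [set e in F | e.1 != c].
Definition rF := forest_root Fc c'.
Definition orphan v := [forall u, (u, v) \notin Fc].
Definition TF := [set e : V * V | (e.2 != rF) && ((e \in Fc) || (e.1 == c') && orphan e.2)].

Lemma mem_Fc u v : ((u, v) \in Fc) = ((u, v) \in F) && (u != c).
Proof. by rewrite inE. Qed.

Lemma Fc_sub : Fc \subset F.
Proof. by apply/subsetP => e; rewrite inE => /andP []. Qed.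

Lemma Fc_in_unique : in_unique Fc.
Proof. exact: in_uniqueS Fc_sub forest_in_unique. Qed.

Lemma Fc_acyclic : ~ has_dcycle Fc.
Proof. by move/(has_dcycleS Fc_sub); apply: forest_acyclic. Qed.

Lemma orphanP v : reflect (forall u, (u, v) \notin Fc) (orphan v).
Proof. exact: forallP. Qed.

Lemma rF_orphan u : (u, rF) \notin Fc.
Proof. exact: forest_root_noin Fc_acyclic c' u. Qed.

Lemma mem_TF u v : (u, v) \in TF -> v != rF /\ ((u, v) \in Fc \/ u = c' /\ orphan v).
Proof.
by rewrite inE /= => /andP [v_rF /orP [uv|/andP [/eqP -> orph]]]; split=> //; [left|right].
Qed.

Lemma Fc_sub_TF u v : (u, v) \in Fc -> (u, v) \in TF.
Proof. by move=> uv; rewrite inE /= uv andbT; apply: contraNneq (rF_orphan u) => <-. Qed.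

Lemma orphan_neq_c' v : orphan v -> v != rF -> v != c'.
Proof.
by move=> /orphanP orph; apply: contraNneq => v_c'; rewrite /rF -v_c' forest_root_id.
Qed.

Lemma TF_sub_edges : TF \subset edges D.
Proof.
case: F_forest => /subsetP F_D _; apply/subsetP => [[u v]] /mem_TF [v_rF [uv|[-> orph]]].
  exact/F_D/(subsetP Fc_sub).
by rewrite inE; apply: c'_src; apply: orphan_neq_c'.
Qed.

Lemma TF_in_unique : in_unique TF.
Proof.
move=> a a' y /mem_TF [_ [ay|[-> /orphanP orph]]] /mem_TF [_ [a'y|[-> /orphanP orph']]] //.
- exact: Fc_in_unique ay a'y.
- by move: (orph' a); rewrite ay.
- by move: (orph a'); rewrite a'y.
Qed.

Lemma TF_tree : spanning_rooted_tree D TF rF.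
Proof.
have rF_orphan_TF u : (u, rF) \notin TF by rewrite inE /= eqxx.
have has_parent v : v != rF -> exists u, (u, v) \in TF.
  case: (boolP (orphan v)) => [orph v_rF|].
    by exists c'; rewrite inE /= v_rF eqxx orph orbT.
  by rewrite negb_forall => /existsP [u]; rewrite negbK => /Fc_sub_TF uv; exists u.
(* The other components of [Fc] hang below [c'], so they are ranked after the
   component of [c']. *)
pose f v := if forest_root Fc v == rF then depth Fc v else depth Fc v + depth Fc c'.
suff f_incr u v : (u, v) \in TF -> f u < f v.
  exact: (spanning_rooted_tree_of_rank (f := f) rF_orphan_TF TF_in_unique TF_sub_edges).
case/mem_TF => v_rF [uv|[-> /orphanP orph]].
  rewrite /f (forest_root_edge Fc_in_unique Fc_acyclic uv).
  by case: ifP => _; rewrite ?ltn_add2r; apply: depth_edge Fc_acyclic uv.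
rewrite /f (forest_root_id orph) (negbTE v_rF) eqxx.
by rewrite -{1}[depth Fc c']add0n ltn_add2r depth_gt0.
Qed.

Lemma TF_leaf : is_leaf TF c.
Proof.
move=> y; apply/negP => /mem_TF [_ [|[cc' _]]]; first by rewrite mem_Fc eqxx andbF.
by move: c_neq_c'; rewrite cc' eqxx.
Qed.

Definition c_root := forest_root Fc c.

Lemma c_root_orphan u : (u, c_root) \notin F.
Proof.
apply/negP => u_root; have [u_c|u_c] := eqVneq u c.
  apply: forest_acyclic (edge_connect_dcycle u_root _); rewrite u_c.
  apply: (connect_sub (e' := erel F)) (forest_root_connect Fc c) => x y xy.
  exact/connect1/(subsetP Fc_sub).
by move: (forest_root_noin Fc_acyclic c u); rewrite mem_Fc u_root u_c.
Qed.

Lemma TF_connect_forest_root v w :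
  orphan v -> v != rF -> connect (erel TF) v w -> forest_root Fc w = v.
Proof.
move=> orph v_rF /connectP [q q_path ->] {w}.
suff root_path x r :
    path (erel TF) x r -> forest_root Fc x = v -> forest_root Fc (last x r) = v.
  by apply: root_path q_path _; apply: forest_root_id; apply/orphanP.
elim: r x => [|y r IHr] x //= /andP [xy y_r] x_root; apply: IHr y_r _.
case/mem_TF: xy => _ [xy|[x_c' _]].
  by rewrite -(forest_root_edge Fc_in_unique Fc_acyclic xy).
by move: v_rF; rewrite -x_root x_c' eqxx.
Qed.

Definition F_choice v := if [pick u | (u, v) \in F] is Some u then Some (u != c) else None.

Lemma F_choice_edge u v : (u, v) \in F -> F_choice v = Some (u != c).
Proof.
rewrite /F_choice; case: pickP => [u' /= u'v uv|/(_ u) /= -> //].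
by rewrite (forest_in_unique u'v uv).
Qed.

Lemma F_choiceP v x : F_choice v = Some x -> exists2 u, (u, v) \in F & x = (u != c).
Proof. by rewrite /F_choice; case: pickP => [u /= uv [<-]|//]; exists u. Qed.

Section PathToLeaf.
Variable p : seq V.
Hypothesis p_dpath : dpath TF rF p c.
Local Notation s := (rF :: p).

Lemma F_into_path_sigmaT u v : (u, v) \in F -> v \in s -> (u, v) \in sigmaT rF p c.
Proof.
case: (p_dpath) => p_path [_ p_last] uv v_s; have [v_rF|v_rF] := eqVneq v rF.
  have u_c : u = c.
    apply/eqP; apply: contraT => u_c; move: (rF_orphan u).
    by rewrite mem_Fc u_c andbT -v_rF uv.
  by rewrite !inE u_c v_rF eqxx orbT.
have v_p : v \in p by move: v_s; rewrite in_cons (negbTE v_rF).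
have [a av] := zip_pred_exists rF v_p.
have [u_c|u_c] := eqVneq u c.
  (* Then [v] is an orphan of [Fc] whose [TF]-subtree contains [c], so [v] is
     the [Fc]-root of [c], which has no parent in [F]. *)
  have orph : orphan v.
    apply/orphanP => w; rewrite mem_Fc; apply/negP => /andP [wv].
    by rewrite (forest_in_unique wv uv) u_c eqxx.
  have v_c : connect (erel TF) v c by rewrite -p_last; apply: mem_path_connect.
  by move: (c_root_orphan u); rewrite /c_root (TF_connect_forest_root orph v_rF v_c) uv.
have uv_TF : (u, v) \in TF by apply: Fc_sub_TF; rewrite mem_Fc uv u_c.
by rewrite -(tree_in_unique TF_tree (path_zip_edge p_path av) uv_TF) !inE av.
Qed.

Lemma F_sigmaT_proper : F :&: sigmaT rF p c \proper sigmaT rF p c.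
Proof.
apply/properP; split; first exact: subsetIr.
have [crF|crF] := boolP ((c, rF) \in F); last first.
  by exists (c, rF); rewrite !inE ?eqxx ?orbT ?(negbTE crF).
(* Otherwise [c_root] lies on the path below [rF]; being an orphan of [Fc], its
   predecessor on the path is [c'], and [c' -> c_root] is not in [F]. *)
have root_rF : c_root != rF by apply: contraTneq crF => <-; apply: c_root_orphan.
have root_c : connect (erel TF) c_root c.
  apply: (connect_sub (e' := erel TF)) (forest_root_connect Fc c) => x y xy.
  exact/connect1/Fc_sub_TF.
have := dpath_connect_mem (tree_root_orphan TF_tree) (tree_in_unique TF_tree) p_dpath root_c.
rewrite in_cons (negbTE root_rF) => root_p.
have [a a_root] := zip_pred_exists rF root_p.
case: p_dpath => p_path _; case/mem_TF: (path_zip_edge p_path a_root) => _ [a_root_Fc|[a_c' _]].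
  by move: (forest_root_noin Fc_acyclic c a); rewrite a_root_Fc.
exists (c', c_root); first by rewrite !inE -a_c' a_root.
by rewrite inE (negbTE (c_root_orphan c')).
Qed.

Lemma F_S_face_decomp : F = (F :&: sigmaT rF p c) :|: chosen_edges c rF TF p F_choice.
Proof.
apply/setP => [[u v]]; rewrite in_setU in_setI [_ \in chosen_edges _ _ _ _ _]inE /=.
apply/idP/idP => [uv|/orP [/andP [] //|/andP [_]]].
  have [v_s|v_s] := boolP (v \in s); first by rewrite uv F_into_path_sigmaT.
  rewrite (F_choice_edge uv) /=; have [_|u_c] := eqVneq u c; first by rewrite orbT.
  by rewrite /= Fc_sub_TF ?orbT // mem_Fc uv u_c.
case v_choice: (F_choice v) => [[]|] //; have [u0 u0v x_u0] := F_choiceP v_choice.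
  case/mem_TF => _ [/(subsetP Fc_sub) //|[_ /orphanP orph]].
  by move: (orph u0); rewrite mem_Fc u0v -x_u0.
have u0_c : u0 = c by apply/eqP; rewrite -[u0 == c]negbK -x_u0.
by move=> /eqP ->; rewrite -u0_c.
Qed.

End PathToLeaf.

Lemma forest_S_face : exists (T : {set V * V}) (r : V) (p : seq V),
  [/\ spanning_rooted_tree D T r, is_leaf T c, dpath T r p c & S_face T r p c F].
Proof.
have [_ [_ /(_ c) [p [p_dpath _]]]] := TF_tree.
exists TF, rF, p; split=> //; [exact: TF_tree | exact: TF_leaf |].
exists (F :&: sigmaT rF p c); split; first exact: F_sigmaT_proper.
by exists F_choice; apply: F_S_face_decomp.
Qed.

End ForestToTree.

Theorem mainTheorem3 (V : finType) (D : rel V) (c c' : V) :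
  (forall x : V, ~~ D x x) ->
  c != c' -> complete_source D c -> complete_source D c' ->
  (forall (T : {set V * V}) (r : V) (p : seq V),
     spanning_rooted_tree D T r -> is_leaf T c -> dpath T r p c ->
     forall F : {set V * V}, S_face T r p c F -> directed_forest D F) /\
  (forall F : {set V * V},
     directed_forest D F <->
     exists (T : {set V * V}) (r : V) (p : seq V),
       [/\ spanning_rooted_tree D T r, is_leaf T c, dpath T r p c
         & S_face T r p c F]).
Proof.
(* Loops never occur in forests. *)
move=> _ c_neq_c' c_src c'_src.
have faces_forest T r p : spanning_rooted_tree D T r -> is_leaf T c -> dpath T r p c ->
    forall F, S_face T r p c F -> directed_forest D F.
  by move=> T_tree c_leaf p_dpath F; apply: S_face_forest c_neq_c' c_src T_tree c_leaf p_dpath F.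
split=> // F; split; first exact: forest_S_face c_neq_c' c'_src.
by case=> T [r [p [T_tree c_leaf p_dpath]]]; apply: faces_forest.
Qed.
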